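(* For sufficiently small $r>0$ there is a constant $C$ depending only on $r$ such that for all $z\in\mathbb{B}_n$ and all $w\in D_\psi(z,r)$, $$\Big|2\,\mathrm{Re}\Big(\frac{1}{1-\langle w,z\rangle}\Big)-\frac{1}{1-|z|^2}-\frac{1}{1-|w|^2}\Big|\le C.$$
   Context: $\mathbb{B}_n$ is the open unit ball of $\mathbb{C}^n$, $\langle z,w\rangle=\sum_jz_j\overline{w_j}$. For $z\ne0$, $P_z\zeta=\frac{\langle\zeta,z\rangle}{\langle z,z\rangle}z$, $P_0=0$, $Q_z=I-P_z$, and $D_\psi(z,r)=\{w\in\mathbb{B}_n:|z-P_zw|<r(1-|z|^2)^{3/2},\ |Q_zw|<r(1-|z|^2)\}$. *)

From HB Require Import structures.
From mathcomp Require Import all_boot all_order all_algebra.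
From mathcomp Require Import complex.
From mathcomp Require Import reals.
Set Implicit Arguments. Unset Strict Implicit. Unset Printing Implicit Defensive.
Import Order.TTheory GRing.Theory Num.Theory.
Local Open Scope ring_scope.

Section Defs.
Variables (R : realType) (n : nat).
Local Notation C := R[i].
Definition cvec := 'rV[C]_n.

Definition cinner (z w : cvec) : C := \sum_(j < n) z 0 j * conjc (w 0 j).
Definition cnorm2 (z : cvec) : R := complex.Re (cinner z z).
Definition cnorm (z : cvec) : R := Num.sqrt (cnorm2 z).
Definition in_ball (z : cvec) : Prop := cnorm z < 1.
Definition Pz (z zeta : cvec) : cvec :=
  if z == 0 then 0 else (cinner zeta z / cinner z z) *: z.
Definition Qz (z zeta : cvec) : cvec := zeta - Pz z zeta.
Definition D_psi (z : cvec) (r : R) (w : cvec) : Prop :=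
  in_ball w /\
  cnorm (z - Pz z w) < r * ((1 - cnorm z ^+ 2) * Num.sqrt (1 - cnorm z ^+ 2)) /\
  cnorm (Qz z w) < r * (1 - cnorm z ^+ 2).
End Defs.

(* Put a = 1 - |z|^2 and d = <z - w, z>.  Then 1 - <w,z> = a + d and
   1 - |w|^2 = a + 2 Re d - |z - w|^2, while Pythagoras (z - P_z w is a multiple
   of z and Q_z w is orthogonal to z) splits |z - w|^2 = |z - P_z w|^2 + |Q_z w|^2.
   On D_psi(z,r) this gives |d|^2 <= |z - P_z w|^2 < r^2 a^3 and
   |z - w|^2 < 2 r^2 a^2.  In the quantity to bound the first-order terms in d
   cancel, leaving a ratio whose numerator is O(a^4) and whose denominator is
   of exact order a^4; for r < 1/4 it is at most 2. *)

From HB Require Import structures.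
From mathcomp Require Import all_boot all_order all_algebra.
From mathcomp Require Import complex reals.
From mathcomp Require Import ring lra.
Import Order.TTheory GRing.Theory Num.Theory.
Local Open Scope ring_scope.
Local Notation Re := complex.Re.
Local Notation Im := complex.Im.

Lemma Re_inv_realDc (R : rcfType) (a : R) (x : R[i]) :
  Re (a%:C%C + x)^-1 = (a + Re x) / ((a + Re x) ^+ 2 + Im x ^+ 2).
Proof. by case: x => u v /=; rewrite add0r. Qed.

Lemma Re_inv_perturbation_le2 (R : rcfType) (a e : R) (d : R[i]) :
  0 < a -> a <= 1 -> 0 <= e -> e <= a ^+ 2 / 8 ->
  Re d ^+ 2 + Im d ^+ 2 <= a ^+ 3 / 16 ->
  `| 2 * Re (a%:C%C + d)^-1 - a^-1 - (a + 2 * Re d - e)^-1 | <= 2.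
Proof.
rewrite Re_inv_realDc; move: (Re d) (Im d) => d1 d2 a_gt0 a_le1 e_ge0 e_le d_le.
have a3_le : a ^+ 3 <= a ^+ 2 by rewrite exprS; nra.
have [d1_lb d1_ub] : - (a / 4) <= d1 /\ d1 <= a / 4.
  by have := sqr_ge0 d2; split; nra.
set b := a + 2 * d1 - e; set U := (a + d1) ^+ 2 + d2 ^+ 2.
set D := d1 ^+ 2 + d2 ^+ 2 in d_le *.
have [b_lb b_ub] : 3 * a / 8 <= b /\ b <= 3 * a / 2 by rewrite /b; split; nra.
have U_lb : 9 * a ^+ 2 / 16 <= U by rewrite /U; have := sqr_ge0 d2; nra.
have b_gt0 : 0 < b by lra.
have U_gt0 : 0 < U by have := exprn_gt0 2 a_gt0; lra.
have D_ge0 : 0 <= D by rewrite addr_ge0 ?sqr_ge0.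
have -> : 2 * ((a + d1) / U) - a^-1 - b^-1
          = - ((a ^+ 2 * e + (a + b) * D) / (U * a * b)).
  by rewrite /U /b /D; field; rewrite -/U -/b !gt_eqF.
have Uab_gt0 : 0 < U * a * b by rewrite !mulr_gt0.
have num_ge0 : 0 <= a ^+ 2 * e + (a + b) * D.
  by rewrite addr_ge0 ?mulr_ge0 ?sqr_ge0 //; lra.
rewrite normrN ger0_norm ?divr_ge0 ?(ltW Uab_gt0) // ler_pdivrMr //.
have : (a + b) * D <= (5 * a / 2) * (a ^+ 3 / 16) by apply: ler_pM => //; lra.
have : (9 * a ^+ 2 / 16) * a * (3 * a / 8) <= U * a * b.
  by apply: ler_pM; [rewrite !mulr_ge0 ?sqr_ge0|lra|apply: ler_pM|]; lra.
have : a ^+ 2 * e <= a ^+ 2 * (a ^+ 2 / 8) by rewrite ler_wpM2l ?sqr_ge0.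
by rewrite !exprS !expr0 !mulr1; nra.
Qed.

Section InnerProduct.
Context {R : realType} {n : nat}.
Implicit Types (u v w z : cvec R n) (c : R[i]).

Lemma cinnerBl u v w : cinner (u - v) w = cinner u w - cinner v w.
Proof. by rewrite /cinner -sumrB; apply: eq_bigr => j _; rewrite !mxE mulrBl. Qed.

Lemma cinnerBr u v w : cinner u (v - w) = cinner u v - cinner u w.
Proof. by rewrite /cinner -sumrB; apply: eq_bigr => j _; rewrite !mxE rmorphB mulrBr. Qed.

Lemma cinnerZl c u v : cinner (c *: u) v = c * cinner u v.
Proof. by rewrite /cinner mulr_sumr; apply: eq_bigr => j _; rewrite !mxE mulrA. Qed.

Lemma cinnerZr c u v : cinner u (c *: v) = conjc c * cinner u v.
Proof.
by rewrite /cinner mulr_sumr; apply: eq_bigr => j _; rewrite !mxE rmorphM mulrCA.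
Qed.

Lemma cinnerC u v : cinner v u = conjc (cinner u v).
Proof.
rewrite /cinner rmorph_sum; apply: eq_bigr => j _.
by rewrite rmorphM /= conjcK mulrC.
Qed.

Lemma cinner0r u : cinner u 0 = 0.
Proof. by rewrite /cinner big1 // => j _; rewrite mxE rmorph0 mulr0. Qed.

Lemma cinner_self_ge0 u : 0 <= cinner u u.
Proof. by rewrite /cinner sumr_ge0 // => j _; rewrite mulcJ_ge0. Qed.

Lemma cinner_self u : cinner u u = (cnorm2 u)%:C%C.
Proof.
rewrite /cnorm2; have := cinner_self_ge0 u; rewrite lecE => /andP[/eqP].
by case: (cinner u u) => x y /= ->.
Qed.

Lemma cinner_self_eq0 u : (cinner u u == 0) = (u == 0).
Proof.
apply/idP/eqP => [|->]; last by rewrite cinner0r.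
rewrite /cinner psumr_eq0 => [/allP u0|j _]; last exact: mulcJ_ge0.
apply/rowP => j; rewrite mxE.
have /implyP/(_ isT) := u0 j (mem_index_enum j).
by rewrite mulf_eq0 conjc_eq0 orbb => /eqP.
Qed.

Lemma cnorm2_ge0 u : 0 <= cnorm2 u.
Proof. by rewrite -ler0c -cinner_self cinner_self_ge0. Qed.

Lemma cnorm_sqr u : cnorm u ^+ 2 = cnorm2 u.
Proof. by rewrite sqr_sqrtr // cnorm2_ge0. Qed.

Lemma cnorm2_lt_sqr u (t : R) : cnorm u < t -> cnorm2 u < t ^+ 2.
Proof. by rewrite -cnorm_sqr => ut; have : 0 <= cnorm u := sqrtr_ge0 _; nra. Qed.

Lemma cnorm2Z c u : cnorm2 (c *: u) = (Re c ^+ 2 + Im c ^+ 2) * cnorm2 u.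
Proof. by rewrite /cnorm2 cinnerZl cinnerZr cinner_self; case: c => x y /=; ring. Qed.

Lemma cnorm2B_orth u v : cinner u v = 0 -> cnorm2 (u - v) = cnorm2 u + cnorm2 v.
Proof.
move=> uv0; apply: complexI; rewrite rmorphD /= -!cinner_self.
by rewrite cinnerBl !cinnerBr [cinner v u]cinnerC uv0 conjc0; ring.
Qed.

Lemma one_sub_cinner z w : 1 - cinner w z = (1 - cnorm2 z)%:C%C + cinner (z - w) z.
Proof. by rewrite cinnerBl rmorphB /= -cinner_self addrA subrK. Qed.

Lemma one_sub_cnorm2 z w :
  1 - cnorm2 w = 1 - cnorm2 z + 2 * Re (cinner (z - w) z) - cnorm2 (z - w).
Proof.
rewrite [cnorm2 (z - w)]/cnorm2 !cinnerBl !cinnerBr [cinner z w]cinnerC.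
rewrite !raddfB /= -!/(cnorm2 _).
have -> : Re (conjc (cinner w z)) = Re (cinner w z) by case: (cinner w z).
ring.
Qed.

Lemma subr_Pz_colinear z w : exists c, z - Pz z w = c *: z.
Proof.
rewrite /Pz; case: eqP => [->|_]; first by exists 0; rewrite !scaler0 subr0.
by eexists; rewrite -{1}[z]scale1r -scalerBl.
Qed.

Lemma cinner_Qz z w : cinner (Qz z w) z = 0.
Proof.
rewrite /Qz /Pz; case: eqVneq => [->|z0]; first by rewrite cinner0r.
by rewrite cinnerBl cinnerZl divfK ?subrr // cinner_self_eq0.
Qed.

Lemma subr_Pz_Qz z w : z - w = (z - Pz z w) - Qz z w.
Proof. by rewrite /Qz opprB addrA subrK. Qed.

Lemma cnorm2B_Pz_Qz z w : cnorm2 (z - w) = cnorm2 (z - Pz z w) + cnorm2 (Qz z w).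
Proof.
rewrite subr_Pz_Qz; apply: cnorm2B_orth; have [c ->] := subr_Pz_colinear z w.
by rewrite cinnerZl cinnerC cinner_Qz conjc0 mulr0.
Qed.

Lemma cinnerB_Pz_le z w : cnorm2 z <= 1 ->
  Re (cinner (z - w) z) ^+ 2 + Im (cinner (z - w) z) ^+ 2 <= cnorm2 (z - Pz z w).
Proof.
move=> z_le1; rewrite subr_Pz_Qz cinnerBl cinner_Qz subr0.
have [c ->] := subr_Pz_colinear z w.
rewrite cinnerZl cnorm2Z cinner_self; have := cnorm2_ge0 z.
case: c => x y /= s_ge0; rewrite !mulr0 subr0 add0r !exprMn -mulrDl.
by rewrite ler_wpM2l ?addr_ge0 ?sqr_ge0 // expr2 ler_piMl.
Qed.

Lemma D_psi_cnorm2_lt {z r w} : in_ball z -> D_psi z r w ->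
  cnorm2 (z - Pz z w) < r ^+ 2 * (1 - cnorm2 z) ^+ 3 /\
  cnorm2 (Qz z w) < r ^+ 2 * (1 - cnorm2 z) ^+ 2.
Proof.
move=> /cnorm2_lt_sqr; rewrite expr1n -subr_gt0 => a_gt0.
move=> [_ [/cnorm2_lt_sqr zPw_lt /cnorm2_lt_sqr Qw_lt]].
rewrite !cnorm_sqr !exprMn (sqr_sqrtr (ltW a_gt0)) -exprSr in zPw_lt Qw_lt.
by split.
Qed.

End InnerProduct.

Theorem lemma2p12 (R : realType) (n : nat) :
  exists r0 : R, 0 < r0 /\
  forall r : R, 0 < r -> r < r0 ->
  exists C : R, forall z w : cvec R n,
    in_ball z -> D_psi z r w ->
    `| 2 * complex.Re ((1 - cinner w z)^-1)
       - (1 - cnorm z ^+ 2)^-1 - (1 - cnorm w ^+ 2)^-1 | <= C.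
Proof.
exists (1 / 4); split => [|r r_gt0 r_lt]; first lra.
exists 2 => z w z_in w_in.
have [zPw_lt Qw_lt] := D_psi_cnorm2_lt z_in w_in.
have /cnorm2_lt_sqr := z_in; rewrite expr1n => z_lt1.
have d_le := cinnerB_Pz_le z w (ltW z_lt1).
have e_ge0 := addr_ge0 (cnorm2_ge0 (z - Pz z w)) (cnorm2_ge0 (Qz z w)).
rewrite !cnorm_sqr one_sub_cinner (one_sub_cnorm2 z w) cnorm2B_Pz_Qz.
have a_le1 : 1 - cnorm2 z <= 1 by rewrite lerBlDr lerDl cnorm2_ge0.
move: z_lt1; rewrite -subr_gt0; set a := 1 - cnorm2 z in zPw_lt Qw_lt a_le1 * => a_gt0.
have r2_le : r ^+ 2 <= 1 / 16 by rewrite expr2; nra.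
have a3_le : a ^+ 3 <= a ^+ 2 by rewrite exprSr ler_piMr ?sqr_ge0.
have ra3_le : r ^+ 2 * a ^+ 3 <= 1 / 16 * a ^+ 3.
  by rewrite ler_wpM2r // exprn_ge0 // ltW.
have ra2_le : r ^+ 2 * a ^+ 2 <= 1 / 16 * a ^+ 2 by rewrite ler_wpM2r ?sqr_ge0.
apply: Re_inv_perturbation_le2 => //; lra.
Qed.
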